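(* Let $n$ be a positive integer and let $a,b$ be distinct integers with $0<a,b<n$, so that $G=C_{2n}(a,b,n)$ is a $5$-regular circulant graph. If $3$ divides none of the integers $a$, $b$, $2n-a$, $2n-b$, $n$, then $G$ is word-representable.
   Context: Two distinct letters $x,y$ alternate in a word $w$ if, after deleting all other letters from $w$, the resulting word is of the form $xyxy\cdots$ or $yxyx\cdots$ (of even or odd length). A graph $G=(V,E)$ is word-representable if there is a word $w$ over the alphabet $V$, containing every letter of $V$ at least once, such that for all distinct $x,y\in V$, $xy\in E$ if and only if $x$ and $y$ alternate in $w$. For an integer $m$ and a set $R$ of positive integers each at most $m/2$, the circulant graph $C_m(R)$ has vertex set $\{0,1,\dots,m-1\}$, with $i$ and $j$ adjacent iff $\min(|i-j|,\,m-|i-j|)\in R$. $C_{2n}(a,b,n)$ denotes the circulant graph on $2n$ vertices with jump set $\{a,b,n\}$. *)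

From mathcomp Require Import all_boot.
Set Implicit Arguments. Unset Strict Implicit. Unset Printing Implicit Defensive.

Definition alt_word (V : eqType) (x y : V) (k : nat) : seq V :=
  [seq (if odd i then y else x) | i <- iota 0 k].

Definition alternate (V : eqType) (x y : V) (w : seq V) : Prop :=
  let s := [seq z <- w | (z == x) || (z == y)] in
  s = alt_word x y (size s) \/ s = alt_word y x (size s).

Definition word_representable (V : finType) (E : V -> V -> Prop) : Prop :=
  exists w : seq V,
    (forall v : V, v \in w) /\
    (forall x y : V, x != y -> (E x y <-> alternate x y w)).

(* Circulant graph C_m(R) on {0,...,m-1}: i ~ j iff min(|i-j|, m-|i-j|) \in R. *)
Definition circulant_adj (m : nat) (R : seq nat) (i j : 'I_m) : Prop :=
  let d := ((i - j) + (j - i))%N in minn d (m - d) \in R.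

From mathcomp Require Import all_boot.
Set Implicit Arguments. Unset Strict Implicit. Unset Printing Implicit Defensive.

(* Colouring vertex i by i mod 3 is proper, since no jump a, b, n and no
   complementary distance 2n - a, 2n - b, n is a multiple of 3; and every
   properly 3-coloured graph is word-representable.  For the latter, let C0, C1,
   C2 be the colour classes.  Each vertex v contributes a round
   C0 C1 C2 C0 C1 C2 in which one occurrence of v is moved forward into the
   next class C(c v + 1), between the non-neighbours and the neighbours of v
   there.  Restricted to two vertices x, y with c y = c x + 1, every round
   reads xyxy (or yxyx), except that the round of x has a repeated letter
   exactly when x and y are not adjacent.  If c x = c y, the round of whichever
   of x, y is enumerated first has a repeated letter. *)

Section Alternation.

Variable T : eqType.
Implicit Types (x y p q u : T) (w : seq T).

Lemma alt_wordS p q k : alt_word p q k.+1 = p :: alt_word q p k.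
Proof.
rewrite /alt_word /= -[1]/(1 + 0) iotaDl -map_comp; congr (_ :: _).
by apply: eq_map => i /=; case: (odd i).
Qed.

Lemma size_alt_word p q k : size (alt_word p q k) = k.
Proof. by rewrite size_map size_iota. Qed.

Lemma alt_word_sorted p q k : p != q -> sorted (fun a b => a != b) (alt_word p q k).
Proof.
case: k => [|k] //; rewrite alt_wordS /=.
elim: k p q => [|k IHk] p q pq; rewrite ?alt_wordS //= pq.
by apply: IHk; rewrite eq_sym.
Qed.

Lemma alt_word_square_free p q k u : p != q -> ~~ infix [:: u; u] (alt_word p q k).
Proof.
by move=> pq; apply/negP => /infix_sorted/(_ (alt_word_sorted k pq)) /=; rewrite eqxx.
Qed.

Lemma flatten_alt_rounds (I : Type) p q (r : seq I) :
  flatten [seq [:: p; q; p; q] | _ <- r] = alt_word p q (4 * size r).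
Proof. by elim: r => [|_ r IHr] //=; rewrite mulnS !alt_wordS IHr. Qed.

Lemma alternate_sym x y w : alternate x y w <-> alternate y x w.
Proof.
rewrite /alternate (@eq_filter _ _ (fun z => (z == y) || (z == x))) => [|z].
  by split; case; [right | left | right | left].
by rewrite orbC.
Qed.

Lemma alternate_filter x y w : alternate x y (filter (pred2 x y) w) <-> alternate x y w.
Proof. by rewrite /alternate filter_id. Qed.

Lemma alternate_alt_word x y k : alternate x y (alt_word x y k).
Proof.
rewrite /alternate (all_filterP _) ?size_alt_word; first by left.
by rewrite all_map; apply/allP => i _ /=; case: (odd i); rewrite eqxx ?orbT.
Qed.

Lemma square_not_alternate x y w u :
  x != y -> infix [:: u; u] (filter (pred2 x y) w) -> ~ alternate x y w.
Proof.
move=> xy sq; rewrite /alternate -[filter _ w]/(filter (pred2 x y) w).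
by case=> E; move: sq; rewrite E; apply/negP/alt_word_square_free; rewrite // eq_sym.
Qed.

End Alternation.

Lemma infix_flatten (T : eqType) (s : seq T) (ss : seq (seq T)) t :
  t \in ss -> infix s t -> infix s (flatten ss).
Proof.
by case/splitPr=> ss1 ss2 st; rewrite flatten_cat /=; exact/infix_catl/infix_catr.
Qed.

Lemma filter_pred2_enum (T : finType) (x y : T) :
  x != y -> filter (pred2 x y) (enum T) = [:: x; y] \/ filter (pred2 x y) (enum T) = [:: y; x].
Proof.
move=> xy; have: perm_eq (filter (pred2 x y) (enum T)) [:: x; y].
  apply: uniq_perm => [|/=|z]; first by rewrite filter_uniq ?enum_uniq.
    by rewrite inE xy.
  by rewrite mem_filter mem_enum andbT !inE.
case: filter => [|a [|b [|? ?]]] pe; try by have := perm_size pe.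
have ab : a != b by have /= := perm_uniq pe; rewrite !inE xy !andbT.
have ha : a \in [:: x; y] by rewrite -(perm_mem pe) mem_head.
have hb : b \in [:: x; y] by rewrite -(perm_mem pe) !inE eqxx orbT.
by move: ha hb ab; rewrite !inE => /orP[]/eqP-> /orP[]/eqP->; rewrite ?eqxx; auto.
Qed.

Section ThreeColouring.

Variables (V : finType) (e : rel V) (c : V -> nat).

(* v is selected by [u == v] rather than inserted as [:: v], so that
   restricting a block to a set of vertices commutes with building it. *)
Definition colour_block (s : seq V) (v : V) (i j : nat) : seq V :=
  if c v == i then
    [seq u <- s | (c u == i) && (u != v)] ++ [seq u <- s | (c u == j) && ~~ e v u]
    ++ [seq u <- s | u == v] ++ [seq u <- s | (c u == j) && e v u]
  else [seq u <- s | c u == i] ++ [seq u <- s | c u == j].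

Definition colour_round (s : seq V) (v : V) : seq V :=
  colour_block s v 0 1 ++ colour_block s v 2 0 ++ colour_block s v 1 2.

Definition colour_word : seq V := flatten [seq colour_round (enum V) v | v <- enum V].

Lemma filter_colour_block (P : pred V) s v i j :
  filter P (colour_block s v i j) = colour_block (filter P s) v i j.
Proof.
rewrite /colour_block; case: ifP => _; rewrite !filter_cat -!filter_predI;
  by do ?congr (_ ++ _); apply: eq_filter => u /=; rewrite andbC.
Qed.

Lemma filter_colour_word (P : pred V) :
  filter P colour_word = flatten [seq colour_round (filter P (enum V)) v | v <- enum V].
Proof.
rewrite filter_flatten -map_comp; congr flatten; apply: eq_map => v /=.
by rewrite !filter_cat !filter_colour_block.
Qed.

Hypothesis c_lt3 : forall v, c v < 3.

Lemma mem_colour_word v : v \in colour_word.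
Proof.
apply/flatten_mapP; exists v; rewrite ?mem_enum // /colour_round.
have vblock j : v \in colour_block (enum V) v (c v) j.
  by rewrite /colour_block eqxx !mem_cat mem_filter eqxx mem_enum !orbT.
by move: vblock (c_lt3 v); case: (c v) => [|[|[|]]] // vb _; rewrite !mem_cat vb ?orbT.
Qed.

Lemma colour_round_same x y :
  x != y -> c x = c y -> exists u, infix [:: u; u] (colour_round [:: x; y] x).
Proof.
move=> xy cxy; have yx : y != x by rewrite eq_sym.
have := c_lt3 x; rewrite /colour_round /colour_block /= -cxy eqxx ?(negbTE xy) ?(negbTE yx).
by case: (c x) => [|[|[|]]] //= _; [exists x | exists y | exists x]; rewrite eqxx ?orbT.
Qed.

Lemma colour_round_next s x y v :
  x != y -> c y = (c x).+1 %% 3 -> s = [:: x; y] \/ s = [:: y; x] -> (v != x) || e x y ->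
  colour_round s v = if c x == 2 then [:: y; x; y; x] else [:: x; y; x; y].
Proof.
move=> xy cy hs hv; have yx : y != x by rewrite eq_sym.
have := c_lt3 x; case cx: (c x) => [|[|[|//]]] _; rewrite cx ?modnn ?modn_small // in cy;
  case: hs => ->; rewrite /colour_round /colour_block.
all: case: (eqVneq v x) hv => [-> /= exy | vx _]; last case: (eqVneq v y) => [-> | vy].
all: rewrite /= ?cx ?cy ?eqxx ?(negbTE xy) ?(negbTE yx) ?exy //=.
all: rewrite ?[_ == v]eq_sym ?(negbTE vx) ?(negbTE vy) /=.
all: have := c_lt3 v; case: (c v) => [|[|[|//]]] _; by case: (e v x); case: (e v y).
Qed.

Lemma colour_round_next_square s x y :
  x != y -> c y = (c x).+1 %% 3 -> s = [:: x; y] \/ s = [:: y; x] -> ~~ e x y ->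
  exists u, infix [:: u; u] (colour_round s x).
Proof.
move=> xy cy hs nexy; have yx : y != x by rewrite eq_sym.
have := c_lt3 x; case cx: (c x) => [|[|[|//]]] _; rewrite cx ?modnn ?modn_small // in cy;
  case: hs => ->; rewrite /colour_round /colour_block /= cx cy.
all: rewrite ?eqxx ?(negbTE xy) ?(negbTE yx) (negbTE nexy) ?eqxx /=.
all: by [exists x; rewrite eqxx ?orbT | exists y; rewrite eqxx ?orbT].
Qed.

Lemma colour_word_same x y : x != y -> c x = c y -> ~ alternate x y colour_word.
Proof.
wlog hs : x y / filter (pred2 x y) (enum V) = [:: x; y] => [hwlog xy cxy | xy cxy].
  have [hs|hs] := filter_pred2_enum xy; first exact: hwlog.
  move=> alt; apply: (hwlog y x); rewrite 1?eq_sym //; last exact/alternate_sym.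
  by rewrite -hs; apply: eq_filter => z; apply: orbC.
have [u sq] := colour_round_same xy cxy.
apply: (square_not_alternate (u := u) xy); rewrite filter_colour_word hs.
exact: infix_flatten (map_f _ (mem_enum _ x)) sq.
Qed.

Lemma colour_word_next x y :
  x != y -> c y = (c x).+1 %% 3 -> e x y <-> alternate x y colour_word.
Proof.
move=> xy cy; have hs := filter_pred2_enum xy.
split=> [exy | alt]; last first.
  apply/negPn/negP => nexy; have [u sq] := colour_round_next_square xy cy hs nexy.
  apply: (square_not_alternate (u := u) xy _ alt); rewrite filter_colour_word.
  exact: infix_flatten (map_f _ (mem_enum _ x)) sq.
apply/alternate_filter; rewrite filter_colour_word.
have hv v : (v != x) || e x y by rewrite exy orbT.
rewrite (eq_map (fun v => colour_round_next xy cy hs (hv v))).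
by case: ifP => _; rewrite flatten_alt_rounds; [apply/alternate_sym|];
  apply: alternate_alt_word.
Qed.

Hypotheses (e_sym : symmetric e) (c_proper : forall x y, e x y -> c x != c y).

Theorem three_colouring_word_representable : word_representable (fun x y => e x y).
Proof.
exists colour_word; split=> [|x y xy]; first exact: mem_colour_word.
have [cxy | cy | cx] : [\/ c x = c y, c y = (c x).+1 %% 3 | c x = (c y).+1 %% 3].
  case: (c x) (c_lt3 x) => [|[|[|//]]] _; case: (c y) (c_lt3 y) => [|[|[|//]]] _;
    by [apply: Or31 | apply: Or32 | apply: Or33].
- by split=> [/c_proper | /(colour_word_same xy cxy)]; rewrite ?cxy ?eqxx.
- exact: colour_word_next.
- have yx : y != x by rewrite eq_sym.
  have [to_alt of_alt] := colour_word_next yx cx.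
  by rewrite e_sym; split=> [/to_alt/alternate_sym | /alternate_sym/of_alt].
Qed.

End ThreeColouring.

Definition circulant_rel (m : nat) (R : seq nat) : rel 'I_m :=
  fun i j => let d := ((i - j) + (j - i))%N in minn d (m - d) \in R.
Arguments circulant_rel : clear implicits.

Lemma circulant_rel_sym m R : symmetric (circulant_rel m R).
Proof. by move=> i j; rewrite /circulant_rel addnC. Qed.

Lemma circulant_rel_mod3 m R (i j : 'I_m) :
  {in R, forall r, ~~ (3 %| r) && ~~ (3 %| m - r)} ->
  circulant_rel m R i j -> i %% 3 != j %% 3.
Proof.
move=> hR; wlog ji : i j / j <= i => [hwlog|].
  case/orP: (leq_total j i) => [/hwlog // | ij].
  by rewrite circulant_rel_sym eq_sym; apply: hwlog.
have /eqP ij0 : j - i == 0 by rewrite subn_eq0.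
rewrite /circulant_rel ij0 addn0 eqn_mod_dvd //.
have dm : i - j <= m by rewrite (leq_trans (leq_subr _ _)) // ltnW.
move=> /hR /andP[]; rewrite /minn; case: ifP => _ //.
by rewrite subKn.
Qed.

Theorem theorem20 (n a b : nat) :
  0 < n -> a != b -> 0 < a < n -> 0 < b < n ->
  ~~ (3 %| a) -> ~~ (3 %| b) -> ~~ (3 %| n.*2 - a) -> ~~ (3 %| n.*2 - b) ->
  ~~ (3 %| n) ->
  word_representable (@circulant_adj n.*2 [:: a; b; n]).
Proof.
move=> _ _ _ _ a3 b3 a3' b3' n3.
apply: (@three_colouring_word_representable _ (circulant_rel n.*2 [:: a; b; n])
                                            (fun i => i %% 3)).
- by move=> i; rewrite ltn_pmod.
- exact: circulant_rel_sym.
- move=> i j; apply: circulant_rel_mod3 => r.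
  rewrite !inE => /or3P[]/eqP->; rewrite ?a3 ?b3 ?a3' ?b3' //=.
  by rewrite -addnn addnK n3.
Qed.
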